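(* Fix $t,x$. Let $H(t,x,\cdot):\mathbb{R}^N\to\mathbb{R}$ be real-valued and convex, let $U(t)$ be a nonempty subset of $\mathbb{R}^M$, let $f(t,x,\cdot):\mathbb{R}^M\to\mathbb{R}^N$ be such that $f(t,x,U(t))$ is closed and convex, and let $l(t,x,\cdot):\mathbb{R}^M\to\mathbb{R}$. If $H(t,x,p)=\sup_{u\in U(t)}\{\langle p,f(t,x,u)\rangle-l(t,x,u)\}$ for all $p\in\mathbb{R}^N$, then $$\mathrm{dom}\,H^*(t,x,\cdot)=f(t,x,U(t)).$$
   Context: $H^*(t,x,v)=\sup_{p\in\mathbb{R}^N}\{\langle v,p\rangle-H(t,x,p)\}\in\mathbb{R}\cup\{+\infty\}$ is the Legendre–Fenchel conjugate in the last variable, and $\mathrm{dom}\,H^*(t,x,\cdot)=\{v\in\mathbb{R}^N:H^*(t,x,v)<+\infty\}$. *)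

From HB Require Import structures.
From mathcomp Require Import all_boot all_order all_algebra.
From mathcomp Require Import all_classical all_reals all_analysis.
Set Implicit Arguments. Unset Strict Implicit. Unset Printing Implicit Defensive.
Import Order.TTheory GRing.Theory Num.Theory.
Import numFieldNormedType.Exports.
Local Open Scope classical_set_scope.
Local Open Scope ring_scope.

Definition dotv (R : realType) (n : nat) (u v : 'rV[R]_n) : R :=
  \sum_(i < n) u ord0 i * v ord0 i.

Definition conj_fun (R : realType) (n : nat) (g : 'rV[R]_n -> R) (v : 'rV[R]_n)
  : \bar R :=
  ereal_sup [set ((dotv v p - g p)%:E) | p in [set: 'rV[R]_n]].

Definition edom (R : realType) (n : nat) (g : 'rV[R]_n -> \bar R) : set 'rV[R]_n :=
  [set v | (g v < +oo)%E].

From HB Require Import structures.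
From mathcomp Require Import all_boot all_order all_algebra.
From mathcomp Require Import all_classical all_reals all_analysis.
From mathcomp Require Import ring lra.
Set Implicit Arguments. Unset Strict Implicit. Unset Printing Implicit Defensive.
Import Order.TTheory GRing.Theory Num.Theory.
Import numFieldNormedType.Exports.
Local Open Scope classical_set_scope.
Local Open Scope ring_scope.

(* Every conjugate value H^*(v) dominates <v, p> - H(p), and H(p) is itself
   a supremum of the affine functions p |-> <p, f u> - l u.  For v = f u this
   gives H^*(v) <= l u < +oo.  For v outside the closed convex set
   C = f(U), the nearest point c0 of C to v yields q = v - c0 and d > 0 with
   <q, c> <= <q, v> - d on C; then H(lam q) <= lam (<q, v> - d) + H(0), so
   H^*(v) >= lam d - H(0) for every lam >= 0, i.e. H^*(v) = +oo. *)

Section dotv.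
Variables (R : realType) (n : nat).
Implicit Types u v w : 'rV[R]_n.

Lemma dotvC u v : dotv u v = dotv v u.
Proof. by apply: eq_bigr => i _; rewrite mulrC. Qed.

Lemma dotvDl u w v : dotv (u + w) v = dotv u v + dotv w v.
Proof. by rewrite /dotv -big_split; apply: eq_bigr => i _; rewrite mxE mulrDl. Qed.

Lemma dotvNl u v : dotv (- u) v = - dotv u v.
Proof. by rewrite /dotv -sumrN; apply: eq_bigr => i _; rewrite mxE mulNr. Qed.

Lemma dotvZl a u v : dotv (a *: u) v = a * dotv u v.
Proof. by rewrite /dotv mulr_sumr; apply: eq_bigr => i _; rewrite mxE mulrA. Qed.

Lemma dotvBl u w v : dotv (u - w) v = dotv u v - dotv w v.
Proof. by rewrite dotvDl dotvNl. Qed.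

Lemma dotv0l v : dotv 0 v = 0.
Proof. by rewrite -(scale0r (0 : 'rV[R]_n)) dotvZl mul0r. Qed.

Lemma dotvBr u w v : dotv v (u - w) = dotv v u - dotv v w.
Proof. by rewrite !(dotvC v) dotvBl. Qed.

Lemma dotvZr a u v : dotv v (a *: u) = a * dotv v u.
Proof. by rewrite !(dotvC v) dotvZl. Qed.

Lemma dotvv_ge0 w : 0 <= dotv w w.
Proof. by apply: sumr_ge0 => i _; rewrite -expr2 sqr_ge0. Qed.

Lemma sqr_coord_le_dotvv w i : w ord0 i ^+ 2 <= dotv w w.
Proof.
rewrite /dotv (bigD1 i) //= expr2 lerDl.
by apply: sumr_ge0 => j _; rewrite -expr2 sqr_ge0.
Qed.

Lemma dotvv_eq0 w : (dotv w w == 0) = (w == 0).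
Proof.
apply/eqP/eqP => [w0|->]; last exact: dotv0l.
apply/rowP => i; rewrite mxE; apply/eqP.
by rewrite -sqrf_eq0 eq_le sqr_ge0 -w0 sqr_coord_le_dotvv.
Qed.

Lemma dotvv_gt0 w : (0 < dotv w w) = (w != 0).
Proof. by rewrite lt_def dotvv_ge0 dotvv_eq0 andbT. Qed.

Lemma mx_norm_le_dotvv w : `|w| <= 1 + dotv w w.
Proof.
rewrite [leLHS]/Num.norm /= mx_normrE; apply/bigmax_leP; split.
  by rewrite addr_ge0 ?dotvv_ge0.
move=> [i j] _ /=; rewrite (ord1 i).
apply: le_trans (_ : 1 + w ord0 j ^+ 2 <= _).
  by rewrite -real_normK ?num_real //; nra.
by rewrite lerD2l sqr_coord_le_dotvv.
Qed.

Lemma continuous_dotvv : continuous (fun w => dotv w w).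
Proof.
apply: continuous_big => [|i _]; first exact: add_continuous.
move=> w; apply: continuousM; exact: coord_continuous.
Qed.

Definition sqdist v w := dotv (v - w) (v - w).

Lemma continuous_sqdist v : continuous (sqdist v).
Proof.
have vB : continuous (fun w : 'rV[R]_n => v - w).
  by move=> w; apply: continuousB; [exact: cst_continuous | exact: cvg_id].
have -> : sqdist v = (fun w => dotv w w) \o (fun w => v - w) by [].
by move=> w; apply: continuous_comp; [exact: vB | exact: continuous_dotvv].
Qed.

Lemma sqdist_sublevel_bounded v r : bounded_set [set w | sqdist v w <= r].
Proof.
rewrite /= /bounded_near; near=> M => w /= vwr.
have vw : `|w| <= `|v| + `|v - w|.
  by have := ler_normB v (v - w); rewrite opprB addrCA subrr addr0.
apply: (le_trans vw); apply: le_trans (_ : `|v| + (1 + r) <= _).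
  by rewrite lerD2l (le_trans (mx_norm_le_dotvv _)) ?lerD2l.
by near: M; apply: nbhs_pinfty_ge; exact: num_real.
Unshelve. all: by end_near.
Qed.

Lemma dotvv_subrZ v w s :
  dotv (v - s *: w) (v - s *: w) = dotv v v - 2 * s * dotv v w + s ^+ 2 * dotv w w.
Proof. by rewrite !dotvBl !dotvBr !dotvZl !dotvZr (dotvC w v); ring. Qed.

End dotv.

Section nearest_point.
Variables (R : realType) (n : nat) (C : set 'rV[R]_n) (v : 'rV[R]_n).

Lemma closed_sqdist_min : closed C -> C !=set0 ->
  exists2 c0, C c0 & forall c, C c -> sqdist v c0 <= sqdist v c.
Proof.
move=> Ccl [c1 Cc1].
pose K := C `&` [set c | sqdist v c <= sqdist v c1].
have Kcompact : compact K.
  apply: bounded_closed_compact.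
    apply: sub_boundedr (sqdist_sublevel_bounded v (sqdist v c1)).
    by move=> P SP c [_]; exact: SP.
  apply: closedI => //.
  apply: (@preimage_closed _ _ (sqdist v) [set r | r <= sqdist v c1]) => [c _|].
    exact: continuous_sqdist.
  exact: closed_le.
have K0 : K !=set0 by exists c1; rewrite /K /=; split.
have Kcont : {within K, continuous (sqdist v)}.
  by apply: continuous_subspaceT => c; exact: continuous_sqdist.
have [c0 /[1!inE] -[Cc0 _] c0min] := compact_EVT_min K0 Kcompact Kcont.
exists c0 => // c Cc; have [c_c1|/ltW c1_c] := leP (sqdist v c) (sqdist v c1).
  by apply: c0min; rewrite inE.
by apply: le_trans c1_c; apply: c0min; rewrite inE /K /=; split.
Qed.

Lemma nearest_point_obtuse c0 : convex_set C -> C c0 ->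
  (forall c, C c -> sqdist v c0 <= sqdist v c) ->
  forall c, C c -> dotv (v - c0) (c - c0) <= 0.
Proof.
move=> Ccvx Cc0 c0min c Cc; set q := v - c0; set w := c - c0.
set a := dotv q w; set b := dotv w w; rewrite leNgt; apply/negP => a_gt0.
have b_gt0 : 0 < b.
  rewrite /b dotvv_gt0; apply: contraTneq a_gt0 => w0.
  by rewrite /a w0 dotvC dotv0l ltxx.
(* a small step from c0 towards c would strictly decrease the distance to v *)
pose s := Num.min 1 (a / b).
have s_gt0 : 0 < s by rewrite lt_min ltr01 divr_gt0.
have s_le1 : s <= 1 by rewrite ge_min lexx.
have sb_le_a : s * b <= a by rewrite -ler_pdivlMr // ge_min lexx orbT.
have Cs : C (s *: c + (1 - s) *: c0).
  exact: set_mem (Ccvx c c0 (Itv01 (ltW s_gt0) s_le1) (mem_set Cc) (mem_set Cc0)).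
have := c0min _ Cs; rewrite /sqdist.
have -> : v - (s *: c + (1 - s) *: c0) = q - s *: w.
  rewrite /q /w scalerBr scalerBl scale1r.
  by apply/rowP => i; rewrite !mxE; ring.
by rewrite dotvv_subrZ -/q -/a -/b; nra.
Qed.

Lemma closed_convex_separation : closed C -> convex_set C -> C !=set0 -> ~ C v ->
  exists q d, 0 < d /\ forall c, C c -> dotv q c <= dotv q v - d.
Proof.
move=> Ccl Ccvx C0 Cv; have [c0 Cc0 c0min] := closed_sqdist_min Ccl C0.
exists (v - c0), (sqdist v c0); split.
  by rewrite dotvv_gt0 subr_eq0; apply: contraPneq Cv => ->.
move=> c Cc; have := nearest_point_obtuse Ccvx Cc0 c0min Cc.
by rewrite /sqdist !dotvBr; lra.
Qed.

End nearest_point.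

Lemma conj_fun_ge (R : realType) (n : nat) (g : 'rV[R]_n -> R) v p :
  ((dotv v p - g p)%:E <= conj_fun g v)%E.
Proof. by apply: ereal_sup_ubound; exists p. Qed.

Section conj_fun_sup_affine.
Variables (R : realType) (n : nat) (T : Type) (U : set T).
Variables (f : T -> 'rV[R]_n) (l : T -> R) (g : 'rV[R]_n -> R).
Hypothesis g_sup :
  forall p, (g p)%:E = ereal_sup [set (dotv p (f u) - l u)%:E | u in U].

Lemma sup_affine_le p u : U u -> dotv p (f u) - l u <= g p.
Proof. by move=> Uu; rewrite -lee_fin g_sup; apply: ereal_sup_ubound; exists u. Qed.

Lemma conj_fun_sup_affine_le u : U u -> (conj_fun g (f u) <= (l u)%:E)%E.
Proof.
move=> Uu; apply: ge_ereal_sup => _ [p _ <-]; rewrite lee_fin.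
by have := sup_affine_le p Uu; rewrite dotvC; lra.
Qed.

Lemma conj_fun_sup_affine_separated v q d : 0 < d ->
  (forall u, U u -> dotv q (f u) <= dotv q v - d) -> conj_fun g v = +oo%E.
Proof.
move=> d_gt0 sep; apply: eq_infty => r.
pose lam := Num.max 0 ((r + g 0) / d).
have g_lam : g (lam *: q) <= lam * (dotv q v - d) + g 0.
  rewrite -lee_fin g_sup; apply: ge_ereal_sup => _ [u Uu <-]; rewrite lee_fin.
  have := sup_affine_le 0 Uu; rewrite dotv0l dotvZl.
  have := sep u Uu; have : 0 <= lam by rewrite le_max lexx.
  nra.
apply: le_trans (conj_fun_ge g v (lam *: q)); rewrite lee_fin dotvZr (dotvC v).
have : (r + g 0) / d <= lam by rewrite le_max lexx orbT.
by rewrite ler_pdivrMr //; lra.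
Qed.

End conj_fun_sup_affine.

Theorem lemma3p2 (R : realType) (N M : nat) (t : R) (x : 'rV[R]_N)
  (H : R -> 'rV[R]_N -> 'rV[R]_N -> R)
  (U : R -> set 'rV[R]_M)
  (f : R -> 'rV[R]_N -> 'rV[R]_M -> 'rV[R]_N)
  (l : R -> 'rV[R]_N -> 'rV[R]_M -> R) :
  convex_function [set: 'rV[R]_N] (H t x) ->
  U t !=set0 ->
  closed (f t x @` U t) ->
  convex_set (f t x @` U t) ->
  (forall p : 'rV[R]_N,
     (H t x p)%:E = ereal_sup [set (dotv p (f t x u) - l t x u)%:E | u in U t]) ->
  edom (conj_fun (H t x)) = f t x @` U t.
Proof.
move=> _ [u0 Uu0] Ccl Ccvx Hsup; apply/seteqP; split => v; rewrite /edom /=.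
- move=> Hv; apply: contrapT => Cv.
  have [|q [d [d_gt0 sep]]] := closed_convex_separation Ccl Ccvx _ Cv.
    by exists (f t x u0), u0.
  suff Hv_oo : conj_fun (H t x) v = +oo%E by rewrite Hv_oo ltxx in Hv.
  by apply: (conj_fun_sup_affine_separated Hsup d_gt0) => u Uu; apply: sep; exists u.
- by case=> u Uu <-; exact: le_lt_trans (conj_fun_sup_affine_le Hsup Uu) (ltry _).
Qed.
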